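(* Let $d_{CC}$ be the CC metric on $H(\mathbb{R})$ induced by the $\ell^1$ norm on $\mathbb{R}^2$, and $|\cdot|_{\sf std}$ the word length on $H(\mathbb{Z})$ with respect to ${\sf std}=\{\pm{\sf e}_1,\pm{\sf e}_2\}$. Fix $(x,y)\in\mathbb{Z}^2$. For $z\ge0$ with $z\in\mathbb{Z}+\epsilon(x,y)$, let $n$ be the unique integer with the same parity as $x+y$ such that $n-2<d_{CC}((x,y,z),{\sf 0})\le n$. Then $|(x,y,z)|_{\sf std}=n$.
   Context: Exponential coordinates on $H(\mathbb{R})$: $(x,y,z)(x',y',z')=(x+x',y+y',z+z'+\tfrac12(xy'-yx'))$, ${\sf 0}=(0,0,0)$. $H(\mathbb{Z})=\{(x,y,z):x,y\in\mathbb{Z},z\in\mathbb{Z}+\epsilon(x,y)\}$ with $\epsilon(x,y)=1/2$ if $x,y$ both odd and $0$ otherwise; ${\sf e}_1=(1,0,0)$, ${\sf e}_2=(0,1,0)$. The CC metric: $d_{CC}({\sf p},{\sf q})$ is the infimum over admissible curves ($\gamma_3'=\tfrac12(\gamma_1\gamma_2'-\gamma_2\gamma_1')$) from ${\sf p}$ to ${\sf q}$ of the $\ell^1$-length of their projection to the $(x,y)$-plane. *)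

From Stdlib Require Import Reals ZArith List.
From Coquelicot Require Import Coquelicot.
Open Scope R_scope.

(* Points of H(R) in exponential coordinates (x,y,z). *)
Record H := mkH { hx : R; hy : R; hz : R }.

Definition hmul (p q : H) : H :=
  mkH (hx p + hx q) (hy p + hy q)
      (hz p + hz q + / 2 * (hx p * hy q - hy p * hx q)).

Definition hid : H := mkH 0 0 0.

Definition eps (x y : Z) : R :=
  if (Z.odd x && Z.odd y)%bool then / 2 else 0.

Definition in_HZ (p : H) : Prop :=
  exists (x y k : Z), p = mkH (IZR x) (IZR y) (IZR k + eps x y).

Definition e1 : H := mkH 1 0 0.
Definition e2 : H := mkH 0 1 0.

Definition std (g : H) : Prop :=
  g = e1 \/ g = mkH (-1) 0 0 \/ g = e2 \/ g = mkH 0 (-1) 0.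

Definition word_prod (w : list H) : H := fold_right hmul hid w.

Definition word_length_is (g : H) (n : Z) : Prop :=
  (exists w, List.Forall std w /\ word_prod w = g /\ Z.of_nat (length w) = n) /\
  (forall w, List.Forall std w -> word_prod w = g -> (n <= Z.of_nat (length w))%Z).

Definition admissible (g1 g2 g3 d1 d2 : R -> R) : Prop :=
  forall t, 0 <= t <= 1 ->
    is_derive g1 t (d1 t) /\ is_derive g2 t (d2 t) /\
    continuous d1 t /\ continuous d2 t /\
    is_derive g3 t (/ 2 * (g1 t * d2 t - g2 t * d1 t)).

Definition cc_length (p q : H) (L : R) : Prop :=
  exists g1 g2 g3 d1 d2 : R -> R,
    admissible g1 g2 g3 d1 d2 /\
    mkH (g1 0) (g2 0) (g3 0) = p /\ mkH (g1 1) (g2 1) (g3 1) = q /\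
    L = RInt (fun t => Rabs (d1 t) + Rabs (d2 t)) 0 1.

Definition dCC (p q : H) : Rbar := Glb_Rbar (cc_length p q).

From Stdlib Require Import Reals Lra Lia Psatz ZArith List Classical.
From Coquelicot Require Import Coquelicot.
Open Scope R_scope.

(* A word of length k in std traces a horizontal path of l1-length k, so d_CC <= |g|_std;
   since every word for (x,y,z) has the parity of x + y, d_CC > n - 2 forces |g|_std >= n.
   Conversely, the projection of a horizontal curve of length L from (x,y,z) to 0 fits in a
   box U x V with 2(U + V) = L + |x| + |y| and U V >= z + |x||y|/2, the area the curve has
   to sweep. If d_CC <= n, such boxes exist with U + V arbitrarily close to
   S = (n + |x| + |y|)/2; concavity of W (S - W) and integrality of z + |x||y|/2 then give
   an integer box W x (S - W), and a staircase word around it has length 2S - |x| - |y| = n. *)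

Lemma hmul_assoc p q r : hmul p (hmul q r) = hmul (hmul p q) r.
Proof. destruct p, q, r; unfold hmul; simpl; f_equal; ring. Qed.

Lemma hmul_hid_l p : hmul hid p = p.
Proof. destruct p; unfold hmul, hid; simpl; f_equal; ring. Qed.

Lemma hmul_hid_r p : hmul p hid = p.
Proof. destruct p; unfold hmul, hid; simpl; f_equal; ring. Qed.

Lemma word_prod_app w1 w2 : word_prod (w1 ++ w2) = hmul (word_prod w1) (word_prod w2).
Proof.
  induction w1 as [|s w IH]; simpl.
  - now rewrite hmul_hid_l.
  - now rewrite IH, hmul_assoc.
Qed.

Lemma is_derive_Req (f : R -> R) x l l' : is_derive f x l -> l = l' -> is_derive f x l'.
Proof. now intros H ->. Qed.

Lemma is_derive_const0 (c t : R) : is_derive (fun _ : R => c) t 0.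
Proof. exact (is_derive_const c t). Qed.

Lemma is_derive_affine u v t : is_derive (fun t => u * t + v) t u.
Proof.
  eapply is_derive_Req.
  - apply @is_derive_plus; [apply @is_derive_scal, is_derive_id | apply is_derive_const].
  - unfold plus, scal, one, zero; simpl; unfold mult; simpl; ring.
Qed.

Lemma is_derive_comp_affine (f : R -> R) df u v t :
  is_derive f (u * t + v) df -> is_derive (fun t => f (u * t + v)) t (u * df).
Proof.
  intros Hf. eapply is_derive_Req.
  - apply (is_derive_comp f (fun t => u * t + v)); [exact Hf | apply is_derive_affine].
  - unfold scal; simpl; unfold mult; simpl; ring.
Qed.

Lemma continuous_comp_affine (f : R -> R) u v t :
  continuous f (u * t + v) -> continuous (fun t => f (u * t + v)) t.
Proof.
  intros Hf. apply (continuous_comp (fun t => u * t + v) f); [|exact Hf].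
  apply @ex_derive_continuous. eexists. apply is_derive_affine.
Qed.

Definition signed_sq (u : R) := u * Rabs u.

Lemma is_derive_signed_sq u : is_derive signed_sq u (2 * Rabs u).
Proof.
  destruct (Req_dec u 0) as [->|Hu].
  - apply is_derive_Reals. intros e He. exists (mkposreal e He).
    intros h Hh0 Hh. simpl in Hh. unfold signed_sq.
    rewrite Rabs_R0, Rmult_0_l, Rplus_0_l, Rmult_0_r, Rminus_0_r.
    replace ((h * Rabs h - 0) / h) with (Rabs h) by (field; auto).
    now rewrite Rabs_Rabsolu.
  - unfold signed_sq. eapply is_derive_Req.
    + apply (is_derive_mult (fun u => u) (fun u => Rabs u)); [apply is_derive_id| |].
      * apply (is_derive_Rabs (fun u => u)); [apply is_derive_id | exact Hu].
      * intros; apply Rmult_comm.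
    + simpl. unfold plus, mult, one, sign; simpl.
      destruct (total_order_T 0 u) as [[H|H]|H].
      * rewrite Rabs_pos_eq; lra.
      * lra.
      * rewrite Rabs_left; lra.
Qed.

Lemma is_derive_signed_sq_shift c u :
  is_derive (fun s => signed_sq (s - c)) u (2 * Rabs (u - c)).
Proof.
  eapply is_derive_Req.
  - apply (is_derive_comp signed_sq (fun s => s - c)); [apply is_derive_signed_sq|].
    apply @is_derive_minus; [apply is_derive_id | apply is_derive_const].
  - unfold scal, minus, plus, opp, zero, one; simpl; unfold mult; simpl; ring.
Qed.

(* A C^1 step from 0 (for s <= 0) to 1 (for s >= 1) whose derivative is the tent
   function of height 2 over [0,1]. *)
Definition step (s : R) := signed_sq s + signed_sq (s - 1) - 2 * signed_sq (s - / 2) + / 2.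
Definition step' (s : R) := 2 * Rabs s + 2 * Rabs (s - 1) - 4 * Rabs (s - / 2).

Lemma is_derive_step s : is_derive step s (step' s).
Proof.
  unfold step, step'. eapply is_derive_Req.
  - apply @is_derive_plus; [apply @is_derive_minus; [apply @is_derive_plus|] |].
    + apply is_derive_signed_sq.
    + apply is_derive_signed_sq_shift.
    + apply @is_derive_scal, is_derive_signed_sq_shift.
    + apply is_derive_const.
  - unfold plus, minus, opp, zero, scal; simpl; unfold plus, mult, opp; simpl; ring.
Qed.

Lemma continuous_step' s : continuous step' s.
Proof.
  unfold step'.
  apply @continuous_minus; [apply @continuous_plus|];
    apply @continuous_scal_r; apply continuous_Rabs_comp;
    repeat apply @continuous_minus; auto using continuous_id, continuous_const.
Qed.

Lemma step'_ge0 s : 0 <= step' s.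
Proof. unfold step', Rabs; repeat destruct Rcase_abs; lra. Qed.

Lemma step'_out s : s <= 0 \/ 1 <= s -> step' s = 0.
Proof. unfold step', Rabs; repeat destruct Rcase_abs; lra. Qed.

Lemma step_le0 s : s <= 0 -> step s = 0.
Proof. unfold step, signed_sq, Rabs; intros; repeat destruct Rcase_abs; nra. Qed.

Lemma step_ge1 s : 1 <= s -> step s = 1.
Proof. unfold step, signed_sq, Rabs; intros; repeat destruct Rcase_abs; nra. Qed.

Lemma is_RInt_step' : is_RInt step' 0 1 1.
Proof.
  pose proof (is_RInt_derive step step' 0 1 (fun s _ => is_derive_step s)
                (fun s _ => continuous_step' s)) as HI.
  rewrite step_ge1, step_le0 in HI by lra.
  unfold minus, plus, opp in HI; simpl in HI. now replace (1 + - 0) with 1 in HI by ring.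
Qed.

(** * Horizontal paths and the bound d_CC <= word length *)

(* Admissible curves parametrised on all of R and stationary outside [0,1]; this is
   what keeps reparametrisations and concatenations differentiable at the junctions. *)
Definition horizontal_path (p q : H) (L : R) : Prop :=
  exists g1 g2 g3 d1 d2 : R -> R,
    (forall t, is_derive g1 t (d1 t) /\ is_derive g2 t (d2 t) /\
       continuous d1 t /\ continuous d2 t /\
       is_derive g3 t (/ 2 * (g1 t * d2 t - g2 t * d1 t))) /\
    (forall t, t <= 0 ->
       d1 t = 0 /\ d2 t = 0 /\ g1 t = g1 0 /\ g2 t = g2 0 /\ g3 t = g3 0) /\
    (forall t, 1 <= t ->
       d1 t = 0 /\ d2 t = 0 /\ g1 t = g1 1 /\ g2 t = g2 1 /\ g3 t = g3 1) /\
    mkH (g1 0) (g2 0) (g3 0) = p /\ mkH (g1 1) (g2 1) (g3 1) = q /\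
    is_RInt (fun t => Rabs (d1 t) + Rabs (d2 t)) 0 1 L.

Ltac split5 := split; [|split; [|split; [|split]]].
Ltac split6 := split; [|split5].

Lemma horizontal_path_cc_length p q L : horizontal_path p q L -> cc_length p q L.
Proof.
  intros (g1 & g2 & g3 & d1 & d2 & Hd & _ & _ & H0 & H1 & HI).
  exists g1, g2, g3, d1, d2.
  split; [intros t _; apply Hd | split; [exact H0 | split; [exact H1|]]].
  symmetry. now apply is_RInt_unique.
Qed.

Lemma horizontal_path_const p : horizontal_path p p 0.
Proof.
  destruct p as [a b c].
  exists (fun _ => a), (fun _ => b), (fun _ => c), (fun _ => 0), (fun _ => 0).
  split6; try reflexivity; try solve [intros; repeat split].
  - intros t. split5; try apply is_derive_const0; try apply continuous_const.
    apply (is_derive_Req _ _ 0); [apply is_derive_const0 | simpl; ring].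
  - pose proof (is_RInt_const 0 1 0) as HI.
    unfold scal in HI; simpl in HI; unfold mult in HI; simpl in HI.
    rewrite Rmult_0_r in HI. eapply is_RInt_ext; [| exact HI].
    intros; simpl; rewrite Rabs_R0; ring.
Qed.

(* A straight segment through the origin: g1 d2 - g2 d1 vanishes, so g3 stays 0. *)
Lemma horizontal_path_segment s1 s2 : horizontal_path (mkH s1 s2 0) hid (Rabs s1 + Rabs s2).
Proof.
  assert (Hg : forall s t, is_derive (fun t => s * (1 - step t)) t (- (s * step' t))).
  { intros s t. eapply is_derive_Req.
    - apply @is_derive_scal, @is_derive_minus; [apply is_derive_const | apply is_derive_step].
    - unfold scal, minus, plus, opp, zero; simpl; unfold mult, plus, opp; simpl; ring. }
  assert (Hc : forall s t, continuous (fun t => - (s * step' t)) t).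
  { intros. apply @continuous_opp, @continuous_scal_r, continuous_step'. }
  exists (fun t => s1 * (1 - step t)), (fun t => s2 * (1 - step t)), (fun _ => 0),
    (fun t => - (s1 * step' t)), (fun t => - (s2 * step' t)).
  split6.
  - intros t. split5; auto.
    apply (is_derive_Req _ _ 0); [apply is_derive_const0 | simpl; ring].
  - intros t Ht. rewrite !step_le0, step'_out by lra. repeat split; ring.
  - intros t Ht. rewrite !(step_ge1 t), (step_ge1 1), step'_out by lra. repeat split; ring.
  - rewrite step_le0 by lra. f_equal; ring.
  - rewrite step_ge1 by lra. unfold hid. f_equal; ring.
  - pose proof (is_RInt_scal _ _ _ (Rabs s1 + Rabs s2) _ is_RInt_step') as HI.
    unfold scal in HI; simpl in HI; unfold mult in HI; simpl in HI.
    rewrite Rmult_1_r in HI. eapply is_RInt_ext; [| exact HI].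
    intros t _. simpl.
    rewrite !Rabs_Ropp, !Rabs_mult, (Rabs_pos_eq (step' t)) by apply step'_ge0. ring.
Qed.

Lemma horizontal_path_translate a p q L :
  horizontal_path p q L -> horizontal_path (hmul a p) (hmul a q) L.
Proof.
  destruct a as [a1 a2 a3].
  intros (g1 & g2 & g3 & d1 & d2 & Hd & H0 & H1 & Hp & Hq & HI).
  exists (fun t => a1 + g1 t), (fun t => a2 + g2 t),
    (fun t => a3 + g3 t + / 2 * (a1 * g2 t - a2 * g1 t)), d1, d2.
  split6.
  - intros t. destruct (Hd t) as (D1 & D2 & C1 & C2 & D3). split5; auto.
    + eapply is_derive_Req; [apply @is_derive_plus; [apply is_derive_const0 | exact D1]|].
      unfold plus; simpl; ring.
    + eapply is_derive_Req; [apply @is_derive_plus; [apply is_derive_const0 | exact D2]|].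
      unfold plus; simpl; ring.
    + eapply is_derive_Req.
      * apply @is_derive_plus; [apply @is_derive_plus; [apply is_derive_const0 | exact D3]|].
        apply @is_derive_scal, @is_derive_minus; apply @is_derive_scal; [exact D2 | exact D1].
      * unfold plus, minus, opp, scal; simpl; unfold mult, plus, opp; simpl; ring.
  - intros t Ht. destruct (H0 t Ht) as (E1 & E2 & E3 & E4 & E5).
    rewrite E1, E2, E3, E4, E5. repeat split.
  - intros t Ht. destruct (H1 t Ht) as (E1 & E2 & E3 & E4 & E5).
    rewrite E1, E2, E3, E4, E5. repeat split.
  - now rewrite <- Hp.
  - now rewrite <- Hq.
  - exact HI.
Qed.

Lemma is_RInt_halves (F f h : R -> R) L1 L2 :
  is_RInt f 0 1 L1 -> is_RInt h 0 1 L2 ->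
  (forall t, 0 < t < / 2 -> F t = 2 * f (2 * t + 0)) ->
  (forall t, / 2 < t < 1 -> F t = 2 * h (2 * t + -1)) ->
  is_RInt F 0 1 (L1 + L2).
Proof.
  intros Hf Hh EF EH.
  apply (is_RInt_Chasles (V := R_NormedModule) F 0 (/ 2) 1 L1 L2).
  - eapply is_RInt_ext.
    2:{ apply (is_RInt_comp_lin (V := R_NormedModule) f 2 0 0 (/ 2)).
        now replace (2 * 0 + 0) with 0 by ring; replace (2 * / 2 + 0) with 1 by field. }
    intros t Ht. rewrite Rmin_left, Rmax_right in Ht by lra.
    rewrite EF by lra. reflexivity.
  - eapply is_RInt_ext.
    2:{ apply (is_RInt_comp_lin (V := R_NormedModule) h 2 (-1) (/ 2) 1).
        now replace (2 * / 2 + -1) with 0 by field; replace (2 * 1 + -1) with 1 by ring. }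
    intros t Ht. rewrite Rmin_left, Rmax_right in Ht by lra.
    rewrite EH by lra. reflexivity.
Qed.

(* The concatenation runs the first path at double speed on [0,1/2] and the second one,
   translated so that the pieces match, on [1/2,1]. *)
Lemma horizontal_path_concat p q r L1 L2 :
  horizontal_path p q L1 -> horizontal_path q r L2 -> horizontal_path p r (L1 + L2).
Proof.
  intros (f1 & f2 & f3 & e1 & e2 & Fd & F0 & F1 & Fp & Fq & FI).
  intros (h1 & h2 & h3 & k1 & k2 & Gd & G0 & G1 & Gp & Gq & GI).
  rewrite <- Fq in Gp. injection Gp as E1 E2 E3.
  exists (fun t => f1 (2 * t + 0) + h1 (2 * t + -1) - h1 0),
         (fun t => f2 (2 * t + 0) + h2 (2 * t + -1) - h2 0),
         (fun t => f3 (2 * t + 0) + h3 (2 * t + -1) - h3 0),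
         (fun t => 2 * e1 (2 * t + 0) + 2 * k1 (2 * t + -1)),
         (fun t => 2 * e2 (2 * t + 0) + 2 * k2 (2 * t + -1)).
  destruct (G0 (2 * 0 + -1)) as (_ & _ & J1 & J2 & J3); [lra|].
  destruct (F1 (2 * 1 + 0)) as (_ & _ & K1 & K2 & K3); [lra|].
  split6.
  - intros t.
    destruct (Fd (2 * t + 0)) as (FD1 & FD2 & FC1 & FC2 & FD3).
    destruct (Gd (2 * t + -1)) as (GD1 & GD2 & GC1 & GC2 & GD3).
    assert (Hjoin : forall (f h : R -> R) a b, is_derive f (2 * t + 0) a ->
      is_derive h (2 * t + -1) b ->
      is_derive (fun t => f (2 * t + 0) + h (2 * t + -1) - h 0) t (2 * a + 2 * b)).
    { intros f h a b Hf Hh. eapply is_derive_Req.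
      - apply @is_derive_minus; [apply @is_derive_plus | apply is_derive_const0];
          apply is_derive_comp_affine; eassumption.
      - unfold minus, plus, opp; simpl. ring. }
    split5; [apply Hjoin; assumption | apply Hjoin; assumption | | |].
    1,2: apply @continuous_plus; apply @continuous_scal_r;
         apply continuous_comp_affine; assumption.
    eapply is_derive_Req; [apply (Hjoin _ _ _ _ FD3 GD3)|].
    simpl. destruct (Rle_dec t (/ 2)) as [Ht|Ht].
    + destruct (G0 (2 * t + -1)) as (-> & -> & -> & -> & _); [lra|]. ring.
    + destruct (F1 (2 * t + 0)) as (-> & -> & -> & -> & _); [lra|].
      rewrite E1, E2. ring.
  - intros t Ht.
    destruct (F0 (2 * t + 0)) as (-> & -> & -> & -> & ->); [lra|].
    destruct (G0 (2 * t + -1)) as (-> & -> & -> & -> & ->); [lra|].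
    replace (2 * 0 + 0) with 0 by ring. rewrite J1, J2, J3. repeat split; ring.
  - intros t Ht.
    destruct (F1 (2 * t + 0)) as (-> & -> & -> & -> & ->); [lra|].
    destruct (G1 (2 * t + -1)) as (-> & -> & -> & -> & ->); [lra|].
    replace (2 * 1 + -1) with 1 by ring. rewrite K1, K2, K3. repeat split; ring.
  - replace (2 * 0 + 0) with 0 by ring. rewrite <- Fp, J1, J2, J3. f_equal; ring.
  - replace (2 * 1 + -1) with 1 by ring. rewrite <- Gq, K1, K2, K3, E1, E2, E3. f_equal; ring.
  - apply (is_RInt_halves _ _ _ _ _ FI GI); intros t Ht.
    + destruct (G0 (2 * t + -1)) as (-> & -> & _); [lra|].
      rewrite !Rmult_0_r, !Rplus_0_r, !Rabs_mult, (Rabs_pos_eq 2) by lra. ring.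
    + destruct (F1 (2 * t + 0)) as (-> & -> & _); [lra|].
      rewrite !Rmult_0_r, !Rplus_0_l, !Rabs_mult, (Rabs_pos_eq 2) by lra. ring.
Qed.

Lemma horizontal_path_generator s : std s -> horizontal_path s hid 1.
Proof.
  intros Hs. unfold std, e1, e2 in Hs.
  destruct Hs as [ -> | [ -> | [ -> | -> ]]];
    match goal with |- horizontal_path (mkH ?a ?b 0) _ _ =>
      pose proof (horizontal_path_segment a b) as HP;
      replace (Rabs a + Rabs b) with 1 in HP by (unfold Rabs; repeat destruct Rcase_abs; lra);
      exact HP end.
Qed.

Lemma horizontal_path_word w :
  List.Forall std w -> horizontal_path (word_prod w) hid (INR (length w)).
Proof.
  induction 1 as [|s w Hs Hw IH].
  - apply horizontal_path_const.
  - simpl word_prod. simpl length. rewrite S_INR. apply horizontal_path_concat with (q := s).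
    + rewrite <- (hmul_hid_r s) at 2. now apply horizontal_path_translate.
    + now apply horizontal_path_generator.
Qed.

Lemma dCC_le_word_length w :
  List.Forall std w -> Rbar_le (dCC (word_prod w) hid) (INR (length w)).
Proof.
  intros Hw. apply (proj1 (Glb_Rbar_correct _)).
  apply horizontal_path_cc_length, horizontal_path_word, Hw.
Qed.

(** * Horizontal curves fit in a box *)

Lemma RInt_plusR (f g : R -> R) a b : ex_RInt f a b -> ex_RInt g a b ->
  RInt (fun t => f t + g t) a b = RInt f a b + RInt g a b.
Proof. intros. now apply (RInt_plus (V := R_CompleteNormedModule)). Qed.

Lemma RInt_minusR (f g : R -> R) a b : ex_RInt f a b -> ex_RInt g a b ->
  RInt (fun t => f t - g t) a b = RInt f a b - RInt g a b.
Proof. intros. now apply (RInt_minus (V := R_CompleteNormedModule)). Qed.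

Lemma RInt_scalR (f : R -> R) a b k : ex_RInt f a b ->
  RInt (fun t => k * f t) a b = k * RInt f a b.
Proof. intros. now apply (RInt_scal (V := R_CompleteNormedModule)). Qed.

Lemma RInt_ChaslesR (f : R -> R) a b c : ex_RInt f a b -> ex_RInt f b c ->
  RInt f a b + RInt f b c = RInt f a c.
Proof. intros. now apply (RInt_Chasles (V := R_CompleteNormedModule)). Qed.

Definition continuous01 (f : R -> R) := forall t, 0 <= t <= 1 -> continuous f t.

Lemma continuous01_plus f g : continuous01 f -> continuous01 g -> continuous01 (fun t => f t + g t).
Proof. intros Hf Hg t Ht. apply (continuous_plus (V := R_NormedModule)); auto. Qed.

Lemma continuous01_minus f g : continuous01 f -> continuous01 g -> continuous01 (fun t => f t - g t).
Proof. intros Hf Hg t Ht. apply (continuous_minus (V := R_NormedModule)); auto. Qed.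

Lemma continuous01_mult f g : continuous01 f -> continuous01 g -> continuous01 (fun t => f t * g t).
Proof. intros Hf Hg t Ht. apply (continuous_mult (K := R_AbsRing)); auto. Qed.

Lemma continuous01_const c : continuous01 (fun _ => c).
Proof. intros t _. apply continuous_const. Qed.

Lemma continuous01_abs f : continuous01 f -> continuous01 (fun t => Rabs (f t)).
Proof. intros Hf t Ht. now apply continuous_Rabs_comp, Hf. Qed.

Lemma ex_RInt_continuous01 f a b : 0 <= a -> a <= b -> b <= 1 -> continuous01 f -> ex_RInt f a b.
Proof.
  intros Ha Hab Hb Hf. apply (ex_RInt_continuous (V := R_CompleteNormedModule)).
  intros t Ht. rewrite Rmin_left, Rmax_right in Ht by lra. apply Hf; lra.
Qed.

Lemma abs_RInt_mul_le (f k : R -> R) K : continuous01 f -> continuous01 k ->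
  (forall t, 0 <= t <= 1 -> Rabs (f t) <= K) ->
  Rabs (RInt (fun t => f t * k t) 0 1) <= K * RInt (fun t => Rabs (k t)) 0 1.
Proof.
  intros Hf Hk HK.
  assert (Hex : forall u, continuous01 u -> ex_RInt u 0 1)
    by (intros; apply ex_RInt_continuous01; auto; lra).
  eapply Rle_trans; [apply abs_RInt_le; [lra | apply Hex, continuous01_mult; assumption]|].
  rewrite <- RInt_scalR by (apply Hex, continuous01_abs, Hk).
  apply RInt_le; [lra | apply Hex .. |].
  - now apply continuous01_abs, continuous01_mult.
  - apply continuous01_mult; [apply continuous01_const | now apply continuous01_abs].
  - intros t Ht. rewrite Rabs_mult.
    apply Rmult_le_compat_r; [apply Rabs_pos | apply HK; lra].
Qed.

Section DerivableOnUnitInterval.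

Variables g dg : R -> R.
Hypothesis g_deriv : forall t, 0 <= t <= 1 -> is_derive g t (dg t).
Hypothesis dg_cont : continuous01 dg.

Lemma continuous01_of_deriv : continuous01 g.
Proof.
  intros t Ht. apply (ex_derive_continuous (V := R_NormedModule)).
  exists (dg t). now apply g_deriv.
Qed.

Lemma RInt_deriv01 a b : 0 <= a -> a <= b -> b <= 1 -> RInt dg a b = g b - g a.
Proof.
  intros Ha Hab Hb. apply is_RInt_unique, (is_RInt_derive (V := R_CompleteNormedModule)).
  - intros t Ht. rewrite Rmin_left, Rmax_right in Ht by lra. apply g_deriv; lra.
  - intros t Ht. rewrite Rmin_left, Rmax_right in Ht by lra. apply dg_cont; lra.
Qed.

Lemma abs_increment_le_variation a b : 0 <= a -> a <= b -> b <= 1 ->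
  Rabs (g b - g a) <= RInt (fun t => Rabs (dg t)) a b.
Proof.
  intros Ha Hab Hb. rewrite <- RInt_deriv01 by assumption.
  apply abs_RInt_le; [lra | now apply ex_RInt_continuous01].
Qed.

(* Going from g 0 to g 1 through the two values g t1 and g t2 covers the segment between
   them twice, except for the net displacement. *)
Lemma oscillation_le_variation t1 t2 : 0 <= t1 <= 1 -> 0 <= t2 <= 1 ->
  2 * Rabs (g t2 - g t1) - Rabs (g 1 - g 0) <= RInt (fun t => Rabs (dg t)) 0 1.
Proof.
  revert t1 t2.
  assert (Hord : forall t1 t2, 0 <= t1 -> t1 <= t2 -> t2 <= 1 ->
    2 * Rabs (g t2 - g t1) - Rabs (g 1 - g 0) <= RInt (fun t => Rabs (dg t)) 0 1).
  { intros t1 t2 H1 H12 H2.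
    assert (Habs := continuous01_abs _ dg_cont).
    rewrite <- (RInt_ChaslesR _ 0 t2 1), <- (RInt_ChaslesR _ 0 t1 t2);
      try (apply ex_RInt_continuous01; auto; lra).
    pose proof (abs_increment_le_variation 0 t1 ltac:(lra) ltac:(lra) ltac:(lra)) as V1.
    pose proof (abs_increment_le_variation t1 t2 ltac:(lra) ltac:(lra) ltac:(lra)) as V2.
    pose proof (abs_increment_le_variation t2 1 ltac:(lra) ltac:(lra) ltac:(lra)) as V3.
    revert V1 V2 V3. unfold Rabs; repeat destruct Rcase_abs; intros; lra. }
  intros t1 t2 H1 H2. destruct (Rle_dec t1 t2).
  - apply Hord; lra.
  - rewrite Rabs_minus_sym. apply Hord; lra.
Qed.

End DerivableOnUnitInterval.

Lemma RInt_mul_deriv_add (f df h dh : R -> R) :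
  (forall t, 0 <= t <= 1 -> is_derive f t (df t)) -> continuous01 df ->
  (forall t, 0 <= t <= 1 -> is_derive h t (dh t)) -> continuous01 dh ->
  RInt (fun t => f t * dh t) 0 1 + RInt (fun t => h t * df t) 0 1 = f 1 * h 1 - f 0 * h 0.
Proof.
  intros Df Cf Dh Ch.
  assert (Cf0 := continuous01_of_deriv _ _ Df). assert (Ch0 := continuous01_of_deriv _ _ Dh).
  rewrite <- RInt_plusR by (apply ex_RInt_continuous01; try lra; now apply continuous01_mult).
  rewrite <- (RInt_deriv01 (fun t => f t * h t) (fun t => f t * dh t + h t * df t)); try lra.
  - intros t Ht. eapply is_derive_Req.
    + apply (is_derive_mult (K := R_AbsRing) f h); auto. intros; apply Rmult_comm.
    + unfold plus, mult; simpl. ring.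
  - apply continuous01_plus; now apply continuous01_mult.
Qed.

Section HorizontalCurveToIdentity.

Variables g1 g2 g3 d1 d2 : R -> R.
Variables x y z : R.
Hypothesis curve : admissible g1 g2 g3 d1 d2.
Hypotheses (g1_0 : g1 0 = x) (g2_0 : g2 0 = y) (g3_0 : g3 0 = z).
Hypotheses (g1_1 : g1 1 = 0) (g2_1 : g2 1 = 0) (g3_1 : g3 1 = 0).

Let g1_deriv t : 0 <= t <= 1 -> is_derive g1 t (d1 t).
Proof. apply curve. Qed.
Let g2_deriv t : 0 <= t <= 1 -> is_derive g2 t (d2 t).
Proof. apply curve. Qed.
Let g3_deriv t : 0 <= t <= 1 -> is_derive g3 t (/ 2 * (g1 t * d2 t - g2 t * d1 t)).
Proof. apply curve. Qed.
Let d1_cont : continuous01 d1.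
Proof. intros t Ht. apply curve, Ht. Qed.
Let d2_cont : continuous01 d2.
Proof. intros t Ht. apply curve, Ht. Qed.
Let g1_cont : continuous01 g1 := continuous01_of_deriv _ _ g1_deriv.
Let g2_cont : continuous01 g2 := continuous01_of_deriv _ _ g2_deriv.

Let ex_RInt01 f : continuous01 f -> ex_RInt f 0 1.
Proof. intros; apply ex_RInt_continuous01; auto; lra. Qed.

(* g3' is half the area form g1 dg2 - g2 dg1, and integration by parts trades the second
   term for the first up to the boundary term x y. *)
Lemma horizontal_curve_area : RInt (fun t => g1 t * d2 t) 0 1 = - z - x * y / 2.
Proof.
  pose proof (RInt_mul_deriv_add g1 d1 g2 d2 g1_deriv d1_cont g2_deriv d2_cont) as Hparts.
  assert (Hint : continuous01 (fun t => g1 t * d2 t - g2 t * d1 t))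
    by (apply continuous01_minus; now apply continuous01_mult).
  pose proof (RInt_deriv01 g3 _ g3_deriv
                (continuous01_mult _ _ (continuous01_const _) Hint) 0 1) as Hlift.
  rewrite RInt_scalR, RInt_minusR in Hlift by (try apply ex_RInt01;
    try apply continuous01_mult; auto; lra).
  rewrite g1_0, g2_0, g3_0, g1_1, g2_1, g3_1 in *. lra.
Qed.

(* With w the width of the range of g1 and c its midpoint,
   z + x y / 2 = c y - int (g1 - c) dg2 <= c y + w/2 * (variation of g2), while the range
   of g1 contains both x and 0, so that 2 w <= (variation of g1) + |x|. *)
Lemma horizontal_curve_box : exists U V : R,
  Rabs x <= U /\ Rabs y <= V /\
  2 * (U + V) = RInt (fun t => Rabs (d1 t) + Rabs (d2 t)) 0 1 + Rabs x + Rabs y /\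
  z + Rabs x * Rabs y / 2 <= U * V.
Proof.
  assert (Hpt : forall t, 0 <= t <= 1 -> continuity_pt g1 t)
    by (intros; now apply continuity_pt_filterlim, g1_cont).
  destruct (continuity_ab_maj g1 0 1 ltac:(lra) Hpt) as [tM [HM HtM]].
  destruct (continuity_ab_min g1 0 1 ltac:(lra) Hpt) as [tm [Hm Htm]].
  set (w := g1 tM - g1 tm). set (c := (g1 tM + g1 tm) / 2).
  set (Lx := RInt (fun t => Rabs (d1 t)) 0 1). set (Ly := RInt (fun t => Rabs (d2 t)) 0 1).
  assert (Hrange : g1 tm <= x <= g1 tM /\ g1 tm <= 0 <= g1 tM).
  { rewrite <- g1_0, <- g1_1. repeat split; (apply HM || apply Hm); lra. }
  assert (Hwidth : 2 * w - Rabs x <= Lx).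
  { pose proof (oscillation_le_variation g1 d1 g1_deriv d1_cont tm tM Htm HtM) as Hosc.
    rewrite g1_0, g1_1, Rminus_0_l, Rabs_Ropp in Hosc.
    unfold w. rewrite Rabs_pos_eq in Hosc by lra. exact Hosc. }
  assert (Hx : Rabs x <= Lx).
  { pose proof (abs_increment_le_variation g1 d1 g1_deriv d1_cont 0 1) as Hv.
    rewrite g1_0, g1_1, Rminus_0_l, Rabs_Ropp in Hv. apply Hv; lra. }
  assert (Hy : Rabs y <= Ly).
  { pose proof (abs_increment_le_variation g2 d2 g2_deriv d2_cont 0 1) as Hv.
    rewrite g2_0, g2_1, Rminus_0_l, Rabs_Ropp in Hv. apply Hv; lra. }
  assert (Hcentered : RInt (fun t => (g1 t - c) * d2 t) 0 1
                      = RInt (fun t => g1 t * d2 t) 0 1 + c * y).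
  { rewrite (RInt_ext _ (fun t => g1 t * d2 t - c * d2 t)) by (intros; simpl; ring).
    rewrite RInt_minusR, RInt_scalR, (RInt_deriv01 g2 d2); auto; try lra;
      try apply ex_RInt01; try apply continuous01_mult; auto using continuous01_const.
    rewrite g2_0, g2_1. simpl; ring. }
  assert (Harea : - (- z - x * y / 2 + c * y) <= w / 2 * Ly).
  { rewrite <- horizontal_curve_area, <- Hcentered.
    eapply Rle_trans; [apply Rle_abs|]. rewrite Rabs_Ropp.
    apply abs_RInt_mul_le; auto using continuous01_minus, continuous01_const.
    intros t Ht. assert (g1 tm <= g1 t <= g1 tM) by (split; (apply HM || apply Hm); lra).
    unfold c, w, Rabs; destruct Rcase_abs; lra. }
  assert (Hmid : y * (c - x / 2) <= Rabs y * (w - Rabs x) / 2).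
  { unfold c, w. unfold Rabs; repeat destruct Rcase_abs; nra. }
  exists ((Lx + Rabs x) / 2), ((Ly + Rabs y) / 2). split; [|split; [|split]].
  - lra.
  - lra.
  - unfold Lx, Ly. rewrite RInt_plusR by (apply ex_RInt01, continuous01_abs; auto). lra.
  - assert (0 <= Ly + Rabs y) by (pose proof (Rabs_pos y); lra).
    assert (z + Rabs x * Rabs y / 2 <= w / 2 * (Ly + Rabs y)) by nra.
    nra.
Qed.

End HorizontalCurveToIdentity.

Lemma cc_length_box x y z L : cc_length (mkH x y z) hid L -> exists U V : R,
  Rabs x <= U /\ Rabs y <= V /\ 2 * (U + V) = L + Rabs x + Rabs y /\
  z + Rabs x * Rabs y / 2 <= U * V.
Proof.
  intros (g1 & g2 & g3 & d1 & d2 & Had & H0 & H1 & ->).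
  injection H0 as E1 E2 E3. unfold hid in H1. injection H1 as F1 F2 F3.
  now apply (horizontal_curve_box g1 g2 g3 d1 d2).
Qed.

Lemma cc_length_lt_of_dCC_le p q (r e : R) : Rbar_le (dCC p q) r -> 0 < e ->
  exists L, cc_length p q L /\ L < r + e.
Proof.
  intros Hle He. apply NNPP. intros Hnone.
  assert (Hlb : is_lb_Rbar (cc_length p q) (r + e)).
  { intros L HL. simpl. apply Rnot_lt_le. intros HLt. apply Hnone. now exists L. }
  pose proof (Rbar_le_trans _ _ _ (proj2 (Glb_Rbar_correct _) _ Hlb) Hle) as Hge.
  simpl in Hge. lra.
Qed.

(** * Integer boxes *)

Lemma IZR_lt_succ_le (p q : Z) : IZR p < IZR q + 1 -> (p <= q)%Z.
Proof. intros H. rewrite <- plus_IZR in H. apply lt_IZR in H. lia. Qed.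

Lemma parabola_IZR (S W : Z) : IZR (W * (S - W)) = IZR W * (IZR S - IZR W).
Proof. now rewrite mult_IZR, minus_IZR. Qed.

(* Concavity of W (S - W): its value at U exceeds the linear interpolation between the
   neighbouring integers by at most 1/4, and the values at integers are integers. *)
Lemma parabola_integer_point (S P : Z) (U : R) : IZR P < U * (IZR S - U) + 3 / 4 ->
  exists W : Z, Rabs (IZR W - U) < 1 /\ (P <= W * (S - W))%Z.
Proof.
  intros HP. set (k := (up U - 1)%Z).
  assert (Hk : IZR k <= U < IZR k + 1)
    by (destruct (archimed U); unfold k; rewrite minus_IZR; lra).
  assert (Hfail : forall W, (W * (S - W) < P)%Z -> IZR W * (IZR S - IZR W) + 1 <= IZR P).
  { intros W HW. rewrite <- parabola_IZR, <- plus_IZR. apply IZR_le. lia. }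
  destruct (Z_le_gt_dec P (k * (S - k))) as [Hk0|Hk0].
  { exists k. split; [unfold Rabs; destruct Rcase_abs; lra | exact Hk0]. }
  specialize (Hfail k ltac:(lia)) as Hfk.
  assert (HUk : IZR k < U) by (destruct (Req_dec U (IZR k)) as [E|]; [rewrite E in HP; lra | lra]).
  exists (k + 1)%Z. split; [rewrite plus_IZR; unfold Rabs; destruct Rcase_abs; lra|].
  destruct (Z_le_gt_dec P ((k + 1) * (S - (k + 1)))) as [Hk1|Hk1]; [exact Hk1|].
  specialize (Hfail (k + 1)%Z ltac:(lia)) as Hfk1. rewrite plus_IZR in Hfk1.
  exfalso.
  assert (Hinterp : U * (IZR S - U)
    = (IZR k + 1 - U) * (IZR k * (IZR S - IZR k))
      + (U - IZR k) * ((IZR k + 1) * (IZR S - (IZR k + 1)))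
      + (U - IZR k) * (IZR k + 1 - U)) by ring.
  assert ((U - IZR k) * (IZR k + 1 - U) <= / 4)
    by (pose proof (Rle_0_sqr (U - IZR k - / 2)); unfold Rsqr in *; nra).
  assert ((IZR k + 1 - U) * (IZR k * (IZR S - IZR k) + 1) <= (IZR k + 1 - U) * IZR P)
    by (apply Rmult_le_compat_l; lra).
  assert ((U - IZR k) * ((IZR k + 1) * (IZR S - (IZR k + 1)) + 1) <= (U - IZR k) * IZR P)
    by (apply Rmult_le_compat_l; lra).
  lra.
Qed.

(* The hypothesis on d makes it small enough that U + V < S + d behaves like U + V <= S. *)
Lemma integer_width_of_real_box (a b S P : Z) (U V d : R) :
  (0 <= a)%Z -> (0 <= b)%Z -> IZR a <= U -> IZR b <= V ->
  U + V < IZR S + d -> IZR P <= U * V -> 0 < d -> d * (Rabs (IZR S) + 2) <= / 2 ->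
  exists W : Z, (a <= W <= S - b)%Z /\ (P <= W * (S - W))%Z.
Proof.
  intros Ha Hb HaU HbV HUV HP Hd HdS.
  apply IZR_le in Ha, Hb. pose proof (Rle_abs (IZR S)) as HSabs.
  rewrite Rmult_plus_distr_l in HdS.
  assert (HdSabs : 0 <= d * Rabs (IZR S)) by (apply Rmult_le_pos; [lra | apply Rabs_pos]).
  destruct (Rle_dec U (IZR (S - b))) as [HU|HU]; rewrite minus_IZR in HU.
  - destruct (parabola_integer_point S P U) as (W & HW & HPW).
    + assert (U * V <= U * (IZR S + d - U)) by (apply Rmult_le_compat_l; lra).
      assert (d * U <= d * Rabs (IZR S)) by (apply Rmult_le_compat_l; lra).
      nra.
    + exists W. split; [|exact HPW].
      apply Rabs_def2 in HW. rewrite <- minus_IZR in HU.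
      split; apply IZR_lt_succ_le; lra.
  - exists (S - b)%Z. split.
    + split; [apply IZR_lt_succ_le; rewrite minus_IZR; lra | lia].
    + apply IZR_lt_succ_le. rewrite parabola_IZR.
      replace (IZR S - IZR (S - b)) with (IZR b) by (rewrite minus_IZR; ring).
      rewrite minus_IZR.
      assert (U * V <= (IZR S - IZR b + d) * (IZR b + d)) by (apply Rmult_le_compat; lra).
      assert (d * IZR S <= d * Rabs (IZR S)) by (apply Rmult_le_compat_l; lra).
      assert (d * d <= d * / 4) by (apply Rmult_le_compat_l; lra).
      nra.
Qed.

Lemma integer_width_of_dCC_le (x y z : R) (n a b S P : Z) :
  IZR a = Rabs x -> IZR b = Rabs y -> (n + a + b = 2 * S)%Z ->
  IZR P = z + IZR a * IZR b / 2 -> Rbar_le (dCC (mkH x y z) hid) (IZR n) ->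
  exists W : Z, (a <= W <= S - b)%Z /\ (P <= W * (S - W))%Z.
Proof.
  intros Ha Hb HS HP Hle.
  assert (HSpos : 0 < Rabs (IZR S) + 2) by (pose proof (Rabs_pos (IZR S)); lra).
  set (d := / (2 * (Rabs (IZR S) + 2))).
  assert (Hd : 0 < d) by (unfold d; apply Rinv_0_lt_compat; lra).
  destruct (cc_length_lt_of_dCC_le _ _ _ (2 * d) Hle ltac:(lra)) as (L & HL & HLn).
  destruct (cc_length_box _ _ _ _ HL) as (U & V & HU & HV & HUV & Harea).
  apply IZR_eq in HS. rewrite !plus_IZR, mult_IZR in HS.
  apply (integer_width_of_real_box a b S P U V d); try lra.
  - apply le_IZR. rewrite Ha. apply Rabs_pos.
  - apply le_IZR. rewrite Hb. apply Rabs_pos.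
  - rewrite HP, Ha, Hb. lra.
  - right. unfold d. field. lra.
Qed.

(** * Words around a box *)

Definition has_word (g : H) (n : Z) : Prop :=
  exists w, List.Forall std w /\ word_prod w = g /\ Z.of_nat (length w) = n.

Definition pow_word (s : H) (n : Z) : list H := repeat s (Z.to_nat n).

Lemma word_prod_pow_word p q n : (0 <= n)%Z ->
  word_prod (pow_word (mkH p q 0) n) = mkH (IZR n * p) (IZR n * q) 0.
Proof.
  intros Hn. unfold pow_word. rewrite <- (Z2Nat.id n) at 2 3 by assumption.
  rewrite <- INR_IZR_INZ. induction (Z.to_nat n) as [|m IH].
  - simpl. unfold hid. f_equal; ring.
  - simpl repeat. simpl word_prod. rewrite IH, S_INR. unfold hmul; simpl. f_equal; ring.
Qed.

Lemma length_pow_word s n : (0 <= n)%Z -> Z.of_nat (length (pow_word s n)) = n.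
Proof. intros. unfold pow_word. rewrite repeat_length. lia. Qed.

Lemma std_pow_word s n : std s -> List.Forall std (pow_word s n).
Proof.
  intros Hs. apply Forall_forall. intros t Ht. now apply repeat_spec in Ht as ->.
Qed.

Lemma std_e1 : std e1.
Proof. now left. Qed.

Lemma std_e2 : std e2.
Proof. now right; right; left. Qed.

Lemma std_inv_e1 : std (mkH (-1) 0 0).
Proof. right; left; reflexivity. Qed.

Lemma std_inv_e2 : std (mkH 0 (-1) 0).
Proof. right; right; right; reflexivity. Qed.

Lemma bounded_euclid_split (W H r : Z) : (1 <= W)%Z -> (0 <= H)%Z -> (0 <= r <= W * H)%Z ->
  exists i t, (0 <= i <= W - 1)%Z /\ (0 <= t <= H)%Z /\ r = (t + i * H)%Z.
Proof.
  intros HW HH Hr.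
  destruct (Z.eq_dec H 0) as [->|HH0]; [exists 0%Z, 0%Z; lia|].
  set (i := Z.min (r / H) (W - 1)).
  pose proof (Z.mul_div_le r H ltac:(lia)). pose proof (Z.mod_pos_bound r H ltac:(lia)).
  pose proof (Z.div_mod r H ltac:(lia)). pose proof (Z.div_pos r H ltac:(lia) ltac:(lia)).
  exists i, (r - i * H)%Z. unfold i.
  destruct (Z.le_ge_cases (r / H) (W - 1));
    [rewrite Z.min_l by lia | rewrite Z.min_r by lia]; nia.
Qed.

(* The projection of the word runs down from 0 to (0, b - H), right to (j, b - H), up t,
   right 1, up to (j + 1, b), right to (W, b) and back left to (a, b): the region between
   this staircase and the line y = b has area j H + H - t = P, and closing the path with
   the chord back to 0 removes a triangle of area a b / 2. *)
Lemma has_word_box (a b W H P : Z) : (0 <= a <= W)%Z -> (0 <= b <= H)%Z ->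
  (0 <= P <= W * H)%Z ->
  has_word (mkH (IZR a) (IZR b) (IZR P - IZR a * IZR b / 2)) (2 * W + 2 * H - a - b).
Proof.
  intros Ha Hb HP.
  destruct (Z.eq_dec W 0) as [->|HW0].
  - assert (a = 0 /\ P = 0)%Z as [-> ->] by lia.
    exists (pow_word (mkH 0 (-1) 0) (H - b) ++ pow_word e2 H). split; [|split].
    + apply Forall_app; split; apply std_pow_word; [apply std_inv_e2 | apply std_e2].
    + rewrite word_prod_app. unfold e2. rewrite !word_prod_pow_word by lia.
      unfold hmul; simpl. rewrite minus_IZR. f_equal; field.
    + rewrite length_app, Nat2Z.inj_add, !length_pow_word by lia. lia.
  - destruct (bounded_euclid_split W H (W * H - P) ltac:(lia) ltac:(lia) ltac:(nia))
      as (i & t & Hi & Ht & Hr).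
    set (j := (W - 1 - i)%Z).
    exists (pow_word (mkH 0 (-1) 0) (H - b) ++ pow_word e1 j ++ pow_word e2 t ++ (e1 :: nil)
            ++ pow_word e2 (H - t) ++ pow_word e1 (W - j - 1) ++ pow_word (mkH (-1) 0 0) (W - a)).
    split; [|split].
    + repeat (apply Forall_app; split);
        auto using std_pow_word, std_e1, std_e2, std_inv_e1, std_inv_e2.
    + rewrite !word_prod_app. unfold e1, e2. rewrite !word_prod_pow_word by lia.
      simpl (word_prod (_ :: nil)). rewrite hmul_hid_r.
      assert (HPR : IZR P = IZR W * IZR H - IZR t - IZR i * IZR H).
      { rewrite <- !mult_IZR, <- !minus_IZR. f_equal. lia. }
      unfold j, hmul; simpl. rewrite !minus_IZR, HPR. f_equal; field.
    + rewrite !length_app. simpl length.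
      rewrite !Nat2Z.inj_add, !length_pow_word by lia. lia.
Qed.

Definition rot (g : H) : H := mkH (- hy g) (hx g) (hz g).

Lemma rot_hmul g h : rot (hmul g h) = hmul (rot g) (rot h).
Proof. destruct g, h; unfold rot, hmul; simpl; f_equal; ring. Qed.

Lemma rot_std s : std s -> std (rot s).
Proof.
  unfold std, rot, e1, e2. intros [ -> | [ -> | [ -> | -> ]]]; simpl.
  - right; right; left. f_equal; ring.
  - right; right; right. f_equal; ring.
  - right; left. f_equal; ring.
  - left. f_equal; ring.
Qed.

Lemma word_prod_map_rot w : word_prod (map rot w) = rot (word_prod w).
Proof.
  induction w as [|s w IH]; simpl.
  - unfold rot, hid; simpl. f_equal; ring.
  - now rewrite IH, rot_hmul.
Qed.

Lemma has_word_rot g n : has_word g n -> has_word (rot g) n.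
Proof.
  intros (w & Hw & <- & Hn). exists (map rot w). split; [|split].
  - apply Forall_map. eapply Forall_impl; [apply rot_std | exact Hw].
  - apply word_prod_map_rot.
  - now rewrite length_map.
Qed.

Lemma has_word_signs (x y : Z) z n :
  has_word (mkH (IZR (Z.abs x)) (IZR (Z.abs y)) z) n ->
  has_word (mkH (IZR (Z.abs y)) (IZR (Z.abs x)) z) n ->
  has_word (mkH (IZR x) (IZR y) z) n.
Proof.
  intros Hxy Hyx.
  destruct (Z.abs_spec x) as [[_ Ex]|[_ Ex]], (Z.abs_spec y) as [[_ Ey]|[_ Ey]];
    rewrite Ex, Ey in Hxy, Hyx.
  - exact Hxy.
  - apply has_word_rot, has_word_rot, has_word_rot in Hyx.
    unfold rot in Hyx; simpl in Hyx. rewrite opp_IZR, !Ropp_involutive in Hyx. exact Hyx.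
  - apply has_word_rot in Hyx.
    unfold rot in Hyx; simpl in Hyx. rewrite opp_IZR, Ropp_involutive in Hyx. exact Hyx.
  - apply has_word_rot, has_word_rot in Hxy.
    unfold rot in Hxy; simpl in Hxy. rewrite !opp_IZR, !Ropp_involutive in Hxy. exact Hxy.
Qed.

Lemma word_length_parity w : List.Forall std w -> exists X Y : Z,
  hx (word_prod w) = IZR X /\ hy (word_prod w) = IZR Y /\ Z.Even (Z.of_nat (length w) + X + Y).
Proof.
  induction 1 as [|s w Hs Hw (X & Y & HX & HY & [m Hm])].
  - exists 0%Z, 0%Z. repeat split. now exists 0%Z.
  - simpl word_prod. simpl length. rewrite Nat2Z.inj_succ.
    unfold std, e1, e2 in Hs.
    destruct Hs as [ -> | [ -> | [ -> | -> ]]]; unfold hmul; cbn [hx hy]; rewrite HX, HY.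
    + exists (X + 1)%Z, Y. rewrite plus_IZR. repeat split; try ring. exists (m + 1)%Z; lia.
    + exists (X - 1)%Z, Y. rewrite minus_IZR. repeat split; try ring. exists m; lia.
    + exists X, (Y + 1)%Z. rewrite plus_IZR. repeat split; try ring. exists (m + 1)%Z; lia.
    + exists X, (Y - 1)%Z. rewrite minus_IZR. repeat split; try ring. exists m; lia.
Qed.

(* eps x y is exactly the fractional part of |x| |y| / 2. *)
Lemma area_integral (x y : Z) z : (exists k : Z, z = IZR k + eps x y) ->
  exists P : Z, IZR P = z + IZR (Z.abs x) * IZR (Z.abs y) / 2.
Proof.
  intros [k ->]. set (N := Z.abs (x * y)).
  assert (HN : N = (2 * Z.div2 N + Z.b2z (Z.odd N))%Z) by apply Z.div2_odd.
  assert (Hodd : Z.odd N = (Z.odd x && Z.odd y)%bool).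
  { unfold N. rewrite <- Z.odd_mul. destruct (Z.abs_spec (x * y)) as [[_ ->]|[_ ->]];
      [reflexivity | apply Z.odd_opp]. }
  exists (k + Z.div2 N + Z.b2z (Z.odd N))%Z.
  apply (f_equal IZR) in HN. rewrite plus_IZR, mult_IZR in HN.
  rewrite <- mult_IZR, <- Z.abs_mul. fold N. rewrite HN.
  unfold eps. rewrite <- Hodd, !plus_IZR.
  destruct (Z.odd N); simpl; field.
Qed.

Lemma Even_abs_add (x : Z) : Z.Even (Z.abs x + x).
Proof. destruct (Z.abs_spec x) as [[_ ->]|[_ ->]]; [exists x | exists 0%Z]; lia. Qed.

Lemma word_length_ge_of_dCC_gt w (x y : Z) z n : List.Forall std w ->
  word_prod w = mkH (IZR x) (IZR y) z -> Z.even (n - (x + y)) = true ->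
  Rbar_lt (IZR n - 2) (dCC (mkH (IZR x) (IZR y) z) hid) -> (n <= Z.of_nat (length w))%Z.
Proof.
  intros Hw Hwp Hpar Hlt.
  pose proof (dCC_le_word_length w Hw) as Hle. rewrite Hwp in Hle.
  pose proof (Rbar_lt_le_trans _ _ _ Hlt Hle) as Hgt. simpl in Hgt.
  rewrite INR_IZR_INZ, <- minus_IZR in Hgt. apply lt_IZR in Hgt.
  destruct (word_length_parity w Hw) as (X & Y & HX & HY & [m Hm]).
  rewrite Hwp in HX, HY. simpl in HX, HY. apply eq_IZR in HX, HY. subst X Y.
  apply Z.even_spec in Hpar as [m' Hm']. lia.
Qed.

Lemma has_word_of_dCC_le (x y : Z) z n : 0 <= z -> (exists k : Z, z = IZR k + eps x y) ->
  Z.even (n - (x + y)) = true -> Rbar_le (dCC (mkH (IZR x) (IZR y) z) hid) (IZR n) ->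
  has_word (mkH (IZR x) (IZR y) z) n.
Proof.
  intros Hz Hk Hpar Hle.
  set (a := Z.abs x). set (b := Z.abs y).
  destruct (area_integral x y z Hk) as [P HP]. fold a b in HP.
  apply Z.even_spec in Hpar as [m Hm].
  destruct (Even_abs_add x) as [p Hp], (Even_abs_add y) as [q Hq].
  set (S := (m + p + q)%Z).
  assert (HS : (n + a + b = 2 * S)%Z) by (unfold S, a, b; lia).
  destruct (integer_width_of_dCC_le _ _ _ n a b S P (abs_IZR x) (abs_IZR y) HS HP Hle)
    as (W & HW & HPW).
  assert (HP0 : (0 <= P)%Z).
  { apply le_IZR. rewrite HP. assert (0 <= IZR a) by (apply IZR_le; lia).
    assert (0 <= IZR b) by (apply IZR_le; lia). nra. }
  replace z with (IZR P - IZR a * IZR b / 2) by lra.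
  apply has_word_signs; fold a b.
  - replace n with (2 * W + 2 * (S - W) - a - b)%Z by lia. apply has_word_box; lia.
  - replace n with (2 * (S - W) + 2 * W - b - a)%Z by lia.
    replace (IZR a * IZR b) with (IZR b * IZR a) by ring. apply has_word_box; lia.
Qed.

Theorem mainTheorem9 (x y : Z) (z : R) (n : Z) :
  0 <= z ->
  (exists k : Z, z = IZR k + eps x y) ->
  Z.even (n - (x + y)) = true ->
  Rbar_lt (IZR n - 2) (dCC (mkH (IZR x) (IZR y) z) hid) ->
  Rbar_le (dCC (mkH (IZR x) (IZR y) z) hid) (IZR n) ->
  word_length_is (mkH (IZR x) (IZR y) z) n.
Proof.
  intros Hz Hk Hpar Hlt Hle. split.
  - now apply has_word_of_dCC_le.
  - intros w Hw Hwp. now apply (word_length_ge_of_dCC_gt w x y z).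
Qed.
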